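(* Let $T$ be a tree, $D\subseteq V(T)$, and let $\mathcal X_T$ be the hypergraph associated with $T$. Then $(T,D)$ is MBD Dominator-critical if and only if $\mathcal X_T$ has at least one edge and $D$ is a minimal transversal of $\mathcal X_T$.
   Context: For a tree $T'$, $S(T')$ is obtained by subdividing each edge of $T'$ exactly once; $\mathcal S=\{S(T'):T'\text{ a tree}\}$ and $X(S(T'))=V(T')$ (with $S(P_1)=P_1$, $X(P_1)=V(P_1)$). $F\in\mathcal S$ is a substructure in $T$ if $F$ is a subgraph of $T$ and $\deg_T(v)=\deg_F(v)$ for all $v\in X(F)$. The hypergraph $\mathcal X_T$ has vertex set $V(T)$ and edge set $\{X(F): F\in\mathcal S \text{ is a substructure in } T\}$. A transversal of a hypergraph is a vertex set meeting every edge; it is minimal if no proper subset is a transversal. In the MBD game on a predominated graph $(G,D)$, $D\subseteq V(G)$, Staller and Dominator alternately claim unclaimed vertices of $V(G)$, Staller first; Staller wins if she claims all of $N_G[v]$ for some $v\in V(G)\setminus D$, Dominator wins otherwise. $(G,D)$ is MBD Dominator-critical if $D\neq\emptyset$, Dominator wins on $(G,D)$, and Staller wins on $(G,D\setminus\{v\})$ for every $v\in D$. *)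

From mathcomp Require Import all_boot.
Set Implicit Arguments. Unset Strict Implicit. Unset Printing Implicit Defensive.

Section Defs.
Variable V : finType.

Definition tree_on (X : {set V}) (t : rel V) : Prop :=
  [/\ forall x y, t x y -> (x \in X) && (y \in X),
      symmetric t /\ irreflexive t,
      X != set0,
      forall x y, x \in X -> y \in X -> connect t x y &
      ~ exists s : seq V, [/\ uniq s, 2 < size s & cycle t s]].

Definition is_tree (e : rel V) : Prop := tree_on setT e.

Definition subgraph (e : rel V) (VF : {set V}) (f : rel V) : Prop :=
  symmetric f /\
  forall x y, f x y -> [&& e x y, x \in VF & y \in VF].

(* (VF, f) is isomorphic to S(T') for a tree T' whose vertex set is
   identified with X, i.e. F \in S and X(F) = X. *)
Definition subdivided_tree (VF : {set V}) (f : rel V) (X : {set V}) : Prop :=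
  exists t : rel V,
  [/\ tree_on X t,
      X \subset VF,
      (forall x y, f x y -> ((x \in X) && (y \in VF :\: X)) ||
                            ((y \in X) && (x \in VF :\: X))),
      (forall y, y \in VF :\: X ->
         exists x1 x2, [/\ x1 != x2, t x1 x2 &
           forall z, f y z = (z == x1) || (z == x2)]) &
      (forall x1 x2, t x1 x2 ->
         exists! y, [/\ y \in VF :\: X, f x1 y & f x2 y])].

Definition degree (f : rel V) (v : V) : nat := #|[set u | f v u]|.

(* X is an edge of the hypergraph X_T: X = X(F) for a substructure F of T *)
Definition hyperedge (e : rel V) (X : {set V}) : Prop :=
  exists (VF : {set V}) (f : rel V),
  [/\ subgraph e VF f, subdivided_tree VF f X &
      forall v, v \in X -> degree e v = degree f v].

Definition transversal (e : rel V) (D : {set V}) : Prop :=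
  forall X, hyperedge e X -> X :&: D != set0.

Definition minimal_transversal (e : rel V) (D : {set V}) : Prop :=
  transversal e D /\ forall D' : {set V}, D' \proper D -> ~ transversal e D'.

Definition cnbhd (e : rel V) (v : V) : {set V} := [set u | (u == v) || e v u].

(* S = vertices claimed by Staller, C = all claimed
   vertices, st = true iff it is Staller's turn.  The fuel n bounds
   the number of remaining moves. *)
Fixpoint staller_wins_from (e : rel V) (D : {set V}) (n : nat)
    (S C : {set V}) (st : bool) : bool :=
  if [exists v in ~: D, cnbhd e v \subset S] then true
  else match n with
  | 0 => false
  | n'.+1 =>
      if ~: C == set0 then false
      else if st then
        [exists u in ~: C, staller_wins_from e D n' (u |: S) (u |: C) false]
      else
        [forall u in ~: C, staller_wins_from e D n' S (u |: C) true]
  end.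

Definition staller_wins (e : rel V) (D : {set V}) : bool :=
  staller_wins_from e D #|V| set0 set0 true.

Definition dominator_wins (e : rel V) (D : {set V}) : bool :=
  ~~ staller_wins e D.

Definition dominator_critical (e : rel V) (D : {set V}) : Prop :=
  [/\ D != set0, dominator_wins e D &
      forall v, v \in D -> staller_wins e (D :\ v)].

End Defs.

From Pilot Require Import Defs.
From mathcomp Require Import all_boot zify.
From Stdlib Require Import Classical.
Set Implicit Arguments. Unset Strict Implicit. Unset Printing Implicit Defensive.

(* Staller wins the MBD game on a tree (T, D) exactly when some substructure F of T has X(F)
   disjoint from D, i.e. when D is not a transversal of X_T; criticality of (T, D) is then
   the minimality of the transversal D.
   Given such an F, Staller claims the vertex subdividing the edge of T' at a leaf x.  As
   deg_T(x) = deg_F(x), N[x] then consists of x and Staller's vertices, so Dominator must take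
   x and the leaf is discarded; once T' has no edge left, Staller completes some N[x] herself.
   Conversely, removing the end of a longest path shows that for every forest W of T and
   U included in W, either a matching of W covers U or some substructure of W has X(F) in U.
   For U = V \ D the matching gives Dominator a pairing strategy. *)

Lemma ex_maximal (T : Type) (Q : T -> Prop) (m : T -> nat) (K : nat) :
  (exists x, Q x) -> (forall x, Q x -> m x <= K) ->
  exists2 x, Q x & forall y, Q y -> m y <= m x.
Proof.
move=> [x0 Qx0] bounded; have [n] := ubnP (K - m x0).
elim: n x0 Qx0 => // n IH x Qx ltn.
case: (classic (exists2 y, Q y & m x < m y)) => [[y Qy ltxy]|no_larger].
  by apply: (IH y Qy); have := bounded y Qy; lia.
by exists x => // y Qy; rewrite leqNgt; apply/negP => ltxy; apply: no_larger; exists y.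
Qed.

Section Paths.
Variable V : finType.

Definition acyclic (r : rel V) := ~ exists s : seq V, [/\ uniq s, 2 < size s & cycle r s].

Definition induced (r : rel V) (W : {set V}) : rel V :=
  [rel a b | r a b && (a \in W) && (b \in W)].

Lemma cycle_nbrs (r : rel V) c x : uniq c -> 2 < size c -> cycle r c -> x \in c ->
  exists y z, [/\ y != z, r x y & r z x].
Proof.
move=> Uc Sc Cc /rot_to [i c' E].
have : uniq (x :: c') by rewrite -E rot_uniq.
have : cycle r (x :: c') by rewrite -E rot_cycle.
have : 2 < size (x :: c') by rewrite -E size_rot.
case: c' {E} => [|y [|w c3]] //= _.
move=> /and3P [rxy _]; rewrite rcons_path => /andP [_ rl] /and4P [_ yn _ _].
exists y, (last w c3); split => //.
by apply: contra yn => /eqP ->; rewrite mem_last.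
Qed.

Variable r : rel V.

Lemma sub_acyclic (r' : rel V) : subrel r' r -> acyclic r -> acyclic r'.
Proof.
move=> sub racyc [c [uc sc cc]]; apply: racyc; exists c; split => //.
exact: sub_cycle sub _ cc.
Qed.

Lemma chord_not_acyclic a p1 w p2 :
  uniq (a :: p1 ++ w :: p2) -> path r a (p1 ++ w :: p2) -> r w a -> 0 < size p1 ->
  ~ acyclic r.
Proof.
move=> U P rwa sp1; apply; exists (a :: rcons p1 w); split.
- apply: subseq_uniq U; rewrite -cats1 -cat_cons /= eqxx.
  by apply: cat_subseq; [exact: subseq_refl | rewrite /= eqxx sub0seq].
- by rewrite /= size_rcons; case: p1 sp1 {U P}.
- rewrite /= rcons_path last_rcons rwa andbT.
  by rewrite rcons_path; move: P; rewrite cat_path /= => /andP [-> /andP [->]].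
Qed.

Lemma connect_nbr a b : connect r a b -> a != b -> exists c, r a c.
Proof.
move=> /connectP [[|c q] /= pq ->]; first by rewrite eqxx.
by move: pq => /andP [rac _] _; exists c.
Qed.

Lemma induced_sub W : subrel (induced r W) r.
Proof. by move=> a b /andP [/andP []]. Qed.

Lemma induced_sym W : symmetric r -> symmetric (induced r W).
Proof. by move=> rsym a b; rewrite /induced /= rsym; case: (a \in W); rewrite ?andbT ?andbF. Qed.

Lemma induced_irr W : irreflexive r -> irreflexive (induced r W).
Proof. by move=> rirr a; rewrite /induced /= rirr. Qed.

Lemma induced_acyclic W : acyclic r -> acyclic (induced r W).
Proof. exact/sub_acyclic/induced_sub. Qed.

Definition add_edge a b : rel V :=
  fun x y => r x y || (x == a) && (y == b) || (x == b) && (y == a).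

Lemma tree_on_add_leaf X l x0 : tree_on X r -> l \notin X -> x0 \in X ->
  tree_on (l |: X) (add_edge l x0).
Proof.
move=> [rin [rsym rirr] _ rconn racyc] lX x0X.
have lx0 : l != x0 by apply: contraNneq lX => ->.
have r'l y : add_edge l x0 l y = (y == x0).
  have rly : r l y = false by apply: contraNF lX => /rin /andP [].
  by rewrite /add_edge rly eqxx [l == x0](negbTE lx0) orbF.
have r'sym : symmetric (add_edge l x0).
  move=> a b; rewrite /add_edge rsym.
  by case: (a == l); case: (b == x0); case: (a == x0); case: (b == l); rewrite ?orbT ?orbF.
have r'_sub : subrel r (add_edge l x0) by move=> a b rab; rewrite /add_edge rab.
split.
- move=> a b /orP [/orP [/rin /andP [aX bX] | /andP [/eqP -> /eqP ->]] | /andP [/eqP -> /eqP ->]];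
    by rewrite !in_setU1 ?aX ?bX ?x0X ?eqxx ?orbT.
- split=> // a; rewrite /add_edge rirr /=.
  by case: (eqVneq a l) => [->|]; rewrite ?(negbTE lx0) ?andbF // eq_sym (negbTE lx0).
- by apply/set0Pn; exists l; rewrite setU11.
- have to_x0 c : c \in l |: X -> connect (add_edge l x0) c x0.
    rewrite in_setU1 => /orP [/eqP -> | cX]; first by apply: connect1; rewrite r'l.
    by apply: (connect_sub _ (rconn _ _ cX x0X)) => a b /r'_sub /connect1.
  move=> a b aX bX; apply: connect_trans (to_x0 _ aX) _.
  by rewrite (sym_connect_sym r'sym); apply: to_x0.
- move=> [c [uc sc cc]]; case: (boolP (l \in c)) => lc.
    have [y [z [yz]]] := cycle_nbrs uc sc cc lc.
    by rewrite r'l [add_edge _ _ z l]r'sym r'l => /eqP ey /eqP ez; rewrite ey ez eqxx in yz.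
  apply: racyc; exists c; split => //.
  apply: (sub_in_cycle (P := [pred x | x != l])) _ _ cc.
    move=> a b; rewrite !inE => al bl.
    by rewrite /add_edge (negbTE al) (negbTE bl) !andbF !orbF.
  by apply/allP => x xc; rewrite inE; apply: contraNneq lc => <-.
Qed.

Hypotheses (rsym : symmetric r) (rirr : irreflexive r) (racyc : acyclic r).

Lemma acyclic_path_no_chord x y q w :
  uniq (x :: y :: q) -> path r x (y :: q) -> w \in q -> ~~ r x w.
Proof.
move=> U P wq; case/splitPr: wq U P => q1 q2 U P; apply/negP => rxw.
by apply: (@chord_not_acyclic x (y :: q1) w q2) => //; rewrite rsym.
Qed.

Lemma longest_path_head x q w : uniq (x :: q) -> path r x q ->
  (forall s, uniq s -> sorted r s -> size s <= (size q).+1) -> r x w -> w = head x q.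
Proof.
move=> U P longest rxw.
have wx : w != x by apply: contraTneq rxw => ->; rewrite rirr.
case: (boolP (w \in x :: q)) => [|wq].
  rewrite inE (negbTE wx) /=; case: q U P {longest} => [//|y q] U P.
  rewrite inE => /orP [/eqP //|wq].
  by move: rxw; rewrite (negbTE (acyclic_path_no_chord U P wq)).
suff : (size q).+2 <= (size q).+1 by rewrite ltnn.
apply: (longest (w :: x :: q)); first by rewrite /= wq; move: U => /= ->.
by rewrite /= rsym rxw.
Qed.

(* [l], [p], [v] are the first three vertices of a longest path. *)
Lemma exists_leaf_support a b : r a b ->
  exists l p v, [/\ r l p, forall w, r l w -> w = p &
    forall w, r p w -> w <> l -> w <> v -> forall z, r w z -> z = p].
Proof.
move=> rab.
have ab : uniq [:: a; b] && sorted r [:: a; b].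
  by rewrite /= rab inE !andbT; apply: contraTneq rab => ->; rewrite rirr.
have bounded s : uniq s && sorted r s -> size s <= #|V|.
  by move=> /andP [/card_uniqP <- _]; exact: max_card.
have [s /andP [Us Ps] longest] :=
  @ex_maximal _ (fun s => uniq s && sorted r s) size #|V| (ex_intro _ [:: a; b] ab) bounded.
have := longest _ ab; case: s Us Ps longest => [|l [|p rest]] //= Us Ps longest _.
have {}longest s' : uniq s' -> sorted r s' -> size s' <= (size (p :: rest)).+1.
  by move=> U' P'; apply: longest; rewrite U'.
move: (Ps) => /andP [rlp Prest].
exists l, p, (head p rest); split => //; first by move=> w; apply: (longest_path_head Us Ps).
move=> w rpw wl wv.
have wpath : w \notin l :: p :: rest.
  rewrite !inE !negb_or; apply/and3P; split; first exact/eqP.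
    by apply: contraTneq rpw => ->; rewrite rirr.
  case: rest Us Prest wv {longest Ps} => [//|v rest] Us Prest wv.
  rewrite inE negb_or; apply/andP; split; first exact/eqP.
  apply: contraTN rpw => wrest; apply: (acyclic_path_no_chord _ Prest wrest).
  by move: Us => /= /andP [].
move=> z rwz; apply: (@longest_path_head w (p :: rest)) => //=.
- by move: wpath Us; rewrite /= !inE !negb_or => /and3P [_ -> ->] /andP [_ ->].
by rewrite rsym rpw.
Qed.

Lemma exists_leaf (X : {set V}) : X != set0 -> (forall a b, r a b -> a \in X) ->
  exists2 x, x \in X & forall y z, r x y -> r x z -> y = z.
Proof.
move=> /set0Pn [x0 x0X] rX.
case: (boolP [exists a, exists b, r a b]) => [/existsP [a /existsP [b rab]]|/existsPn none].
  have [l [p [_ [rlp lleaf _]]]] := exists_leaf_support rab.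
  by exists l; [exact: rX rlp | move=> y z /lleaf -> /lleaf ->].
by exists x0 => // y z rxy; move: (none x0) => /existsPn /(_ y); rewrite rxy.
Qed.

End Paths.

Section Game.
Variables (V : finType) (e : rel V) (D : {set V}).

Definition staller_won (S : {set V}) := [exists v in ~: D, cnbhd e v \subset S].

Lemma staller_wins_from0 S C st : staller_wins_from e D 0 S C st = staller_won S.
Proof. by rewrite /=; case: ifP. Qed.

Lemma staller_wins_from_staller n S C : staller_wins_from e D n.+1 S C true =
  staller_won S || (~: C != set0) &&
    [exists u in ~: C, staller_wins_from e D n (u |: S) (u |: C) false].
Proof. by rewrite /= /staller_won; case: ifP => //= _; case: ifP. Qed.

Lemma staller_wins_from_dominator n S C : staller_wins_from e D n.+1 S C false =
  staller_won S || (~: C != set0) &&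
    [forall u in ~: C, staller_wins_from e D n S (u |: C) true].
Proof. by rewrite /= /staller_won; case: ifP => //= _; case: ifP. Qed.

Lemma staller_won_wins n S C st : staller_won S -> staller_wins_from e D n S C st.
Proof. by rewrite /staller_won => won; case: n => [|n] /=; rewrite won. Qed.

Lemma card_setCU1 a (A : {set V}) : a \notin A -> #|~: A| = #|~: (a |: A)|.+1.
Proof.
move=> aA; rewrite (cardsD1 a (~: A)) in_setC aA add1n; congr _.+1.
by apply: eq_card => u; rewrite !inE negb_or andbC.
Qed.

Lemma claim_and_win n u (S C : {set V}) : u \notin C -> staller_won (u |: S) ->
  staller_wins_from e D n.+1 S C true.
Proof.
move=> uC won; rewrite staller_wins_from_staller; apply/orP; right.
apply/andP; split; first by apply/set0Pn; exists u; rewrite in_setC.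
by apply/existsP; exists u; rewrite in_setC uC staller_won_wins.
Qed.

(* Claiming [w] threatens to complete N[x] by claiming [x] next, so Dominator must answer [x]. *)
Lemma forcing_move x w (S C : {set V}) : x \notin C -> w \notin C -> x != w ->
  staller_won (x |: (w |: S)) ->
  staller_wins_from e D #|~: (x |: (w |: C))| (w |: S) (x |: (w |: C)) true ->
  staller_wins_from e D #|~: C| S C true.
Proof.
move=> xC wC xw won forced.
have xwC : x \notin w |: C by rewrite in_setU1 negb_or xw.
rewrite (card_setCU1 wC) (card_setCU1 xwC) staller_wins_from_staller; apply/orP; right.
apply/andP; split; first by apply/set0Pn; exists w; rewrite in_setC.
apply/existsP; exists w; rewrite in_setC wC andTb staller_wins_from_dominator; apply/orP; right.
apply/andP; split; first by apply/set0Pn; exists x; rewrite in_setC.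
apply/forallP => u; apply/implyP; rewrite in_setC => uC.
case: (eqVneq u x) => [-> //|ux].
have : 0 < #|~: (x |: (w |: C))|.
  by apply/card_gt0P; exists u; rewrite in_setC in_setU1 negb_or ux.
case: #|_| => // n _; apply: (claim_and_win _ _ won).
by rewrite in_setU1 negb_or eq_sym ux.
Qed.

Lemma staller_wins_threat x w (S C : {set V}) :
  x \in ~: D -> (forall v, v \in cnbhd e x -> [\/ v = x, v = w | v \in S]) ->
  (x \in C -> x \in S) -> (w \in C -> w \in S) ->
  (x != w -> x \notin C -> w \notin C ->
     staller_wins_from e D #|~: (x |: (w |: C))| (w |: S) (x |: (w |: C)) true) ->
  staller_wins_from e D #|~: C| S C true.
Proof.
move=> xD Nx xS wS forced.
have won (S' : {set V}) : x \in S' -> w \in S' -> S \subset S' -> staller_won S'.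
  move=> xS' wS' /subsetP SS'; apply/existsP; exists x; rewrite xD /=.
  by apply/subsetP => v /Nx [->|->|/SS'].
have Sw := subsetUr [set w] S; have Sx := subsetUr [set x] S.
case: (boolP (x \in S)) => xinS.
  case: (boolP (w \in S)) => winS; first by apply/staller_won_wins/won.
  have wC : w \notin C by apply: contra winS.
  rewrite (card_setCU1 wC); apply: (claim_and_win _ wC).
  by rewrite won ?setU11 // in_setU1 xinS orbT.
have xC : x \notin C by apply: contra xinS.
case: (boolP ((w == x) || (w \in S))) => [wxS|].
  rewrite (card_setCU1 xC); apply: (claim_and_win _ xC); rewrite won ?setU11 //.
  by case/orP: wxS => [/eqP ->|wS']; rewrite in_setU1 ?eqxx ?wS' ?orbT.
rewrite negb_or => /andP [wx winS]; have wC : w \notin C by apply: contra winS.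
have xw : x != w by rewrite eq_sym.
apply: (forcing_move xC wC xw); last exact: forced.
by apply: won; [exact: setU11 | exact/setU1r/setU11 | exact: subset_trans Sw (subsetUr _ _)].
Qed.

Definition pairing (M : {set V}) (m : V -> V) :=
  forall v, v \in M -> [/\ m v \in M, m (m v) = v & e v (m v)].

Section Pairing.
Variables (M : {set V}) (m : V -> V).
Hypotheses (e_irr : irreflexive e) (mM : pairing M m) (undominated_paired : ~: D \subset M).

Definition respects_pairing (S C : {set V}) :=
  forall v, v \in M -> v \in S -> (m v \in C) && (m v \notin S).

Lemma pairing_not_won (S : {set V}) :
  (forall v, v \in M -> v \in S -> m v \notin S) -> ~~ staller_won S.
Proof.
move=> apart; apply/existsP => [[u /andP [uD /subsetP NS]]].
have uM : u \in M by apply: (subsetP undominated_paired).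
have [_ _ eum] := mM uM.
have uS : u \in S by apply: NS; rewrite inE eqxx.
have muS : m u \in S by apply: NS; rewrite inE eum orbT.
by move: (apart u uM uS); rewrite muS.
Qed.

Lemma pairing_partner_neq v : v \in M -> m v != v.
Proof. by move=> /mM [_ _]; apply: contraTneq => ->; rewrite e_irr. Qed.

Lemma respects_pairing_not_won S C x : respects_pairing S C -> x \notin C ->
  ~~ staller_won (x |: S).
Proof.
move=> resp xC; apply: pairing_not_won => v vM; rewrite !in_setU1 => /orP [/eqP vx|vS].
  subst v; rewrite negb_or pairing_partner_neq //=; apply: contraNN xC => mxS.
  by have [mxM mmx _] := mM vM; have := resp _ mxM mxS; rewrite mmx => /andP [].
have /andP [mvC mvS] := resp v vM vS; rewrite negb_or mvS andbT.
by apply: contraTneq mvC => ->.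
Qed.

(* Dominator answers a move on [x] by the partner of [x] when it is still free. *)
Lemma pairing_reply S C x : respects_pairing S C -> x \notin C -> ~: (x |: C) != set0 ->
  exists2 y, y \notin x |: C & respects_pairing (x |: S) (y |: (x |: C)).
Proof.
move=> resp xC free.
have [y yC ypartner] : exists2 y, y \notin x |: C & x \in M -> m x \notin x |: C -> y = m x.
  case: (boolP ((x \in M) && (m x \notin x |: C))) => [/andP [_ mxC]|notM].
    by exists (m x).
  have [y] := set0Pn _ free; rewrite in_setC => yC.
  by exists y => // xM mxC; rewrite xM mxC in notM.
exists y => // v vM; rewrite in_setU1 => /orP [/eqP vx|vS].
  subst v; have mxS : m x \notin S.
    apply: contraNN xC => mxS; have [mxM mmx _] := mM vM.
    by have := resp _ mxM mxS; rewrite mmx => /andP [].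
  rewrite [m x \in x |: S]in_setU1 negb_or mxS pairing_partner_neq // andbT.
  case: (boolP (m x \in x |: C)) => [mxC|mxC]; first by rewrite in_setU1 mxC orbT.
  by rewrite (ypartner vM mxC) setU11.
have /andP [mvC mvS] := resp v vM vS.
rewrite !in_setU1 mvC !orbT negb_or mvS andbT /=.
by apply: contraNneq xC => <-.
Qed.

Lemma dominator_pairing_strategy k S C : respects_pairing S C ->
  ~~ staller_wins_from e D k S C true.
Proof.
elim/ltn_ind: k S C => k IH S C resp.
have notwon : ~~ staller_won S.
  by apply: pairing_not_won => v vM vS; case/andP: (resp v vM vS).
case: k IH => [|k] IH; first by rewrite staller_wins_from0.
rewrite staller_wins_from_staller (negbTE notwon) /= negb_and negb_exists; apply/orP; right.
apply/forallP => x; rewrite in_setC; case: (boolP (x \in C)) => //= xC.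
case: k IH => [|k] IH; first by rewrite staller_wins_from0 (respects_pairing_not_won resp xC).
rewrite staller_wins_from_dominator (negbTE (respects_pairing_not_won resp xC)) /=.
rewrite negb_and negb_forall; case: (boolP (~: (x |: C) != set0)) => //= free.
have [y yC resp'] := pairing_reply resp xC free.
by apply/existsP; exists y; rewrite in_setC yC /=; apply: IH.
Qed.

End Pairing.

(* Staller's vertices [S] among the claimed ones [C]; the branch vertices [X] of a subdivided
   forest [t] still to be attacked, [s a b] being the vertex subdividing the edge [ab]. *)
Record staller_forest (S C X : {set V}) (t : rel V) (s : V -> V -> V) : Prop := {
  sf_undominated : X \subset ~: D;
  sf_nonempty : X != set0;
  sf_support : forall a b, t a b -> (a \in X) && (b \in X);
  sf_sym : symmetric t;
  sf_irr : irreflexive t;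
  sf_acyclic : acyclic t;
  sf_subdivision : forall a b, t a b -> s a b = s b a /\ e a (s a b);
  sf_nbhd : forall x w, x \in X -> e x w -> w \in S \/ exists2 y, t x y & w = s x y;
  sf_claimed : forall x w, x \in X -> w \in cnbhd e x -> w \in C -> w \in S;
  sf_independent : forall x z, x \in X -> z \in X -> ~~ e x z }.

Lemma staller_forest_remove_leaf S C X t s x y :
  staller_forest S C X t s -> x \in X -> (forall y z, t x y -> t x z -> y = z) -> t x y ->
  staller_forest (s x y |: S) (x |: (s x y |: C)) (X :\ x) (induced t (X :\ x)) s.
Proof.
move=> F xX xleaf txy.
have inX z : z \in X :\ x -> z != x /\ z \in X by rewrite !inE => /andP [].
split.
- exact: subset_trans (subsetDl _ _) (sf_undominated F).
- apply/set0Pn; exists y; rewrite !inE; have /andP [_ ->] := sf_support F txy.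
  by rewrite andbT; apply: contraTneq txy => ->; rewrite (sf_irr F).
- by move=> a b /andP [/andP [_ ->] ->].
- exact: induced_sym (sf_sym F).
- exact: induced_irr (sf_irr F).
- exact: induced_acyclic (sf_acyclic F).
- by move=> a b /induced_sub tab; apply: (sf_subdivision F).
- move=> z w /inX [zx zX] ezw.
  case: (sf_nbhd F zX ezw) => [wS|[y' tzy' ->]]; first by left; rewrite in_setU1 wS orbT.
  case: (eqVneq y' x) => [y'x|y'x].
    have txz : t x z by rewrite (sf_sym F) -y'x.
    have [-> _] := sf_subdivision F tzy'.
    by left; rewrite y'x (xleaf _ _ txz txy) setU11.
  right; exists y' => //; have /andP [_ y'X] := sf_support F tzy'.
  by rewrite /induced /= tzy' !inE zx zX y'x y'X.
- move=> z w /inX [zx zX] wN; rewrite !in_setU1 => /or3P [/eqP wx|->|wC]; rewrite ?orbT //.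
    by move: wN; rewrite wx inE eq_sym (negbTE zx) (negbTE (sf_independent F zX xX)).
  by rewrite (sf_claimed F zX wN wC) orbT.
- by move=> a b /inX [_ aX] /inX [_ bX]; exact: (sf_independent F).
Qed.

Lemma staller_forest_wins S C X t s :
  staller_forest S C X t s -> staller_wins_from e D #|~: C| S C true.
Proof.
have [n] := ubnP #|X|; elim: n S C X t s => // n IH S C X t s ltX F.
have tX a b : t a b -> a \in X by move/(sf_support F)/andP => [].
have [x xX xleaf] := exists_leaf (sf_sym F) (sf_irr F) (sf_acyclic F) (sf_nonempty F) tX.
have xD := subsetP (sf_undominated F) x xX.
have claimed w : w \in cnbhd e x -> w \in C -> w \in S := sf_claimed F xX.
have xS : x \in C -> x \in S by apply: claimed; rewrite inE eqxx.
case: (pickP (t x)) => [y txy|isolated].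
  have [_ exs] := sf_subdivision F txy.
  apply: (staller_wins_threat (x := x) (w := s x y)) => //.
  - move=> v; rewrite inE => /orP [/eqP ->|exv]; first by constructor 1.
    case: (sf_nbhd F xX exv) => [vS|[y' txy' ->]]; first by constructor 3.
    by constructor 2; rewrite (xleaf _ _ txy' txy).
  - by apply: claimed; rewrite inE exs orbT.
  move=> _ _ _; apply: IH (staller_forest_remove_leaf F xX xleaf txy).
  by rewrite (cardsD1 x X) xX in ltX.
apply: (staller_wins_threat (x := x) (w := x)) => //; last by rewrite eqxx.
move=> v; rewrite inE => /orP [/eqP ->|exv]; first by constructor 1.
case: (sf_nbhd F xX exv) => [vS|[y' txy' _]]; first by constructor 3.
by move: (isolated y'); rewrite txy'.
Qed.

End Game.

Lemma pair_mem_seq2 (V : eqType) (a b x1 x2 : V) : a != b ->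
  a \in [:: x1; x2] -> b \in [:: x1; x2] -> (a = x1 /\ b = x2) \/ (a = x2 /\ b = x1).
Proof.
rewrite !inE => ab /orP [] /eqP ea /orP [] /eqP eb; subst; auto.
all: by rewrite eqxx in ab.
Qed.

Section Substructure.
Variables (V : finType) (e : rel V).
Hypothesis e_sym : symmetric e.

(* A substructure of the subgraph induced on [W] whose branch vertices [X] lie in [U]:
   [t] is the tree T' on [X] and [s a b] the vertex subdividing its edge [ab]. *)
Record substructure_in (W U X : {set V}) (t : rel V) (s : V -> V -> V) : Prop := {
  sub_branch : X \subset U;
  sub_tree : tree_on X t;
  sub_subdivision : forall a b, t a b ->
    [/\ s a b = s b a, s a b \in W, s a b \notin X, e a (s a b) & e b (s a b)];
  sub_nbhd : forall x w, x \in X -> w \in W -> e x w -> exists2 y, t x y & w = s x y;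
  sub_two : forall a b z, t a b -> z \in X -> e (s a b) z -> z = a \/ z = b }.

Lemma substructure_mono (W' U' W U : {set V}) X t s : substructure_in W' U' X t s ->
  W' \subset W -> U' \subset U ->
  (forall x w, x \in X -> w \in W -> e x w -> w \in W') -> substructure_in W U X t s.
Proof.
move=> [XU' Ttree subdiv nbhd two] /subsetP WW' UU' closed; split => //.
- exact: subset_trans UU'.
- by move=> a b /subdiv [? /WW' ? ? ? ?].
- by move=> x w xX wW exw; apply: nbhd => //; apply: closed wW exw.
Qed.

Lemma substructure_staller_forest D X t s :
  substructure_in setT (~: D) X t s -> staller_forest e D set0 set0 X t s.
Proof.
move=> S; have [tin [tsym tirr] Xne _ tacyc] := sub_tree S; split => //.
- exact: sub_branch S.
- by move=> a b /(sub_subdivision S) [? _ _ ? _].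
- by move=> x w xX exw; right; apply: (sub_nbhd S xX).
- move=> x z xX zX; apply/negP => exz.
  have [y txy zs] := sub_nbhd S xX (in_setT z) exz.
  by have [_ _ + _ _] := sub_subdivision S txy; rewrite -zs zX.
Qed.

Lemma hyperedge_substructure X : hyperedge e X -> exists t s, substructure_in setT X X t s.
Proof.
move=> [VF [f [[fsym fsub] [t [Ttree XVF fedge f2 funiq]] deg]]].
have [tin [tsym tirr] _ _ _] := Ttree.
pose s a b := odflt a [pick w | (w \in VF :\: X) && f a w && f b w].
have sP a b : t a b -> [/\ s a b \in VF :\: X, f a (s a b) & f b (s a b)].
  move=> tab; rewrite /s; case: pickP => [w /andP [/andP [? ?] ?] // | none].
  by have [w [[wY faw fbw] _]] := funiq _ _ tab; move: (none w); rewrite /= wY faw fbw.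
have sU a b w : t a b -> w \in VF :\: X -> f a w -> f b w -> w = s a b.
  move=> tab wY faw fbw; have [w0 [_ uniq_w0]] := funiq _ _ tab.
  have [? ? ?] := sP _ _ tab; by rewrite -(uniq_w0 w) ?(uniq_w0 (s a b)).
(* a branch vertex keeps all its neighbours in F, as its degree is the same *)
have ef x w : x \in X -> e x w -> f x w.
  move=> xX exw; have sub : [set u | f x u] \subset [set u | e x u].
    by apply/subsetP => u; rewrite !inE => /fsub /and3P [].
  have /eqP/setP/(_ w) : [set u | f x u] == [set u | e x u].
    by rewrite eqEcard sub /=; move: (deg x xX); rewrite /degree => ->.
  by rewrite !inE exw.
exists t, s; split => //.
- move=> a b tab; have [sY fas fbs] := sP _ _ tab.
  have /and3P [eas _ _] := fsub _ _ fas; have /and3P [ebs _ _] := fsub _ _ fbs.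
  split; rewrite ?in_setT //; last by move: sY; rewrite in_setD => /andP [].
  by apply: sU; rewrite // tsym.
- move=> x w xX _ exw; have fxw := ef _ _ xX exw.
  have wY : w \in VF :\: X.
    by move: (fedge _ _ fxw); rewrite xX /= => /orP [// | /andP [_]]; rewrite inE xX.
  have [x1 [x2 [x12 t12 fw]]] := f2 _ wY.
  have : f w x by rewrite fsym.
  rewrite fw => /orP [] /eqP ex; subst x.
    by exists x2 => //; apply: sU => //; rewrite fsym fw eqxx orbT.
  have t21 : t x2 x1 by rewrite tsym.
  by exists x1 => //; apply: sU; rewrite // fsym fw eqxx.
- move=> a b z tab zX esz.
  have [sY fas fbs] := sP _ _ tab; have [x1 [x2 [_ _ fw]]] := f2 _ sY.
  have fsz : f (s a b) z by rewrite fsym; apply: ef; rewrite // e_sym.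
  have ab : a != b by apply: contraTneq tab => ->; rewrite tirr.
  have ax : a \in [:: x1; x2] by rewrite !inE -fw fsym.
  have bx : b \in [:: x1; x2] by rewrite !inE -fw fsym.
  have [[-> ->]|[-> ->]] := pair_mem_seq2 ab ax bx;
    by move: fsz; rewrite fw => /orP [] /eqP; auto.
Qed.

Lemma substructure_hyperedge U X t s : substructure_in setT U X t s -> hyperedge e X.
Proof.
move=> S; have [tin [tsym tirr] _ _ _] := sub_tree S.
pose Y := [set w | [exists a, exists b, t a b && (w == s a b)]].
pose f a b := e a b && ((a \in X) && (b \in Y) || (b \in X) && (a \in Y)).
have sY a b : t a b -> s a b \in Y.
  by move=> tab; rewrite inE; apply/existsP; exists a; apply/existsP; exists b; rewrite tab eqxx.
have Y_subdiv w : w \in Y -> exists a b, t a b /\ w = s a b.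
  by rewrite inE => /existsP [a /existsP [b /andP [tab /eqP ->]]]; exists a, b.
have XY w : w \in Y -> w \notin X.
  by move=> /Y_subdiv [a [b [tab ->]]]; have [] := sub_subdivision S tab.
have VFX : (X :|: Y) :\: X = Y.
  apply/setP => w; rewrite in_setD in_setU; case: (boolP (w \in Y)) => wY.
    by rewrite (XY _ wY) orbT.
  by rewrite orbF andNb.
have fX a b : a \in X -> f a b = e a b.
  move=> aX; rewrite /f aX /=; case eab: (e a b) => //=.
  by have [y tay ->] := sub_nbhd S aX (in_setT b) eab; rewrite sY.
have f_sub a b : t a b -> forall z, f (s a b) z = (z == a) || (z == b).
  move=> tab z; have /andP [aX bX] := tin _ _ tab.
  have [_ _ sX eas ebs] := sub_subdivision S tab.
  rewrite /f (negbTE sX) sY //= andbT; case: (boolP (z \in X)) => zX.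
    rewrite andbT; apply/idP/idP => [/(sub_two S tab zX) [] -> | /orP [] /eqP ->];
      by rewrite ?eqxx ?orbT // e_sym.
  by rewrite andbF; apply/esym/norP; split; apply: contraNneq zX => ->.
exists (X :|: Y), f; split.
- split; first by move=> a b; rewrite /f e_sym orbC.
  move=> a b /andP [-> /orP [] /andP [aX bY]];
    by rewrite !in_setU ?aX ?bY ?orbT.
- exists t; split; [exact: sub_tree S | exact: subsetUl | | |].
  + by move=> a b /andP [_]; rewrite VFX.
  + rewrite VFX => y /Y_subdiv [a [b [tab ->]]]; exists a, b; split => //.
    * by apply: contraTneq tab => ->; rewrite tirr.
    * exact: f_sub.
  + move=> x1 x2 t12; have /andP [x1X x2X] := tin _ _ t12.
    have [_ _ _ e1 e2] := sub_subdivision S t12.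
    exists (s x1 x2); split; first by rewrite VFX sY // !fX.
    rewrite VFX => y [/Y_subdiv [a [b [tab ->]]] f1 f2].
    have x12 : x1 != x2 by apply: contraTneq t12 => ->; rewrite tirr.
    have xab x : x \in X -> f x (s a b) -> x \in [:: a; b].
      by move=> xX; rewrite fX // e_sym => /(sub_two S tab xX) [] ->; rewrite !inE eqxx ?orbT.
    have [sab _ _ _ _] := sub_subdivision S tab.
    by case: (pair_mem_seq2 x12 (xab _ x1X f1) (xab _ x2X f2)) => [] [-> ->].
- by move=> x xX; apply: eq_card => u; rewrite !inE fX.
Qed.

End Substructure.

Lemma setD2P (T : finType) (A : {set T}) a b x :
  reflect [/\ x != a, x != b & x \in A] (x \in A :\: [set a; b]).
Proof. by rewrite !inE negb_or -andbA; apply: and3P. Qed.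

Section ForestDichotomy.
Variables (V : finType) (e : rel V).
Hypotheses (e_sym : symmetric e) (e_irr : irreflexive e) (e_acyclic : acyclic e).

Definition pairing_or_substructure (W U : {set V}) :=
  (exists (M : {set V}) m, [/\ M \subset W, U \subset M & pairing e M m]) \/
  (exists X t s, substructure_in e W U X t s).

Definition extend_pairing (l p : V) (m : V -> V) x :=
  if x == l then p else if x == p then l else m x.

Lemma pairing_add_edge (M : {set V}) m l p : l \notin M -> p \notin M -> e l p -> pairing e M m ->
  pairing e (l |: (p |: M)) (extend_pairing l p m).
Proof.
move=> lM pM elp mM.
have lp : l != p by apply: contraTneq elp => ->; rewrite e_irr.
have ml : extend_pairing l p m l = p by rewrite /extend_pairing eqxx.
have mp : extend_pairing l p m p = l by rewrite /extend_pairing eq_sym (negbTE lp) eqxx.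
move=> v; rewrite !in_setU1 => /or3P [/eqP -> | /eqP -> | vM].
- by rewrite ml mp eqxx orbT.
- by rewrite mp ml eqxx e_sym.
have [mvM mmv evm] := mM _ vM.
have neq u : u \in M -> (u == l) = false /\ (u == p) = false.
  by move=> uM; split; apply/negbTE; [apply: contraNneq lM | apply: contraNneq pM] => <-.
have [vl vp] := neq _ vM; have [mvl mvp] := neq _ mvM.
by rewrite /extend_pairing vl vp mvl mvp mmv mvM !orbT.
Qed.

Lemma dichotomy_unmarked_leaf (W U : {set V}) l p : U \subset W -> induced e W l p ->
  (forall w, induced e W l w -> w = p) -> l \notin U ->
  pairing_or_substructure (W :\ l) (U :\ p) -> pairing_or_substructure W U.
Proof.
move=> UW /andP [/andP [elp lW] pW] lleaf lU [[M [m [MW UM mM]]] | [X [t [s S]]]].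
- left; have MW' : M \subset W := subset_trans MW (subsetDl _ _).
  have Up : U \subset p |: (U :\ p) by apply/subsetP => u; rewrite !inE; case: eqP.
  case: (boolP (p \in M)) => pM.
    exists M, m; split => //; apply: subset_trans Up _.
    by rewrite subUset sub1set pM.
  have lM : l \notin M by apply: contraNN lU => /(subsetP MW); rewrite !inE eqxx.
  exists (l |: (p |: M)), (extend_pairing l p m); split.
  + by rewrite !subUset !sub1set lW pW.
  + exact: subset_trans Up (subset_trans (setUS _ UM) (subsetUr _ _)).
  + exact: pairing_add_edge.
- right; exists X, t, s; have /subsetP XU := sub_branch S.
  apply: substructure_mono S (subsetDl _ _) (subsetDl _ _) _.
  move=> x w xX wW exw; rewrite in_setD1 wW andbT.
  have /setD1P [xp xU] := XU x xX.
  apply: contra_neq xp => wl; apply: lleaf.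
  by rewrite /induced /= -wl e_sym exw wW (subsetP UW).
Qed.

Section MarkedLeaf.
Variables (W U X : {set V}) (t : rel V) (s : V -> V -> V) (l p : V).
Hypotheses (S : substructure_in e (W :\: [set l; p]) U X t s)
  (XW : X \subset W :\: [set l; p]) (lW : l \in W) (pW : p \in W) (elp : e l p)
  (lleaf : forall w, w \in W -> e l w -> w = p).

Lemma substructure_add_leaf x0 :
  x0 \in X -> e x0 p -> (forall a, a \in X -> e a p -> a = x0) ->
  substructure_in e W (l |: U) (l |: X) (add_edge t l x0)
    (fun a b => if (a == l) || (b == l) then p else s a b).
Proof.
move=> x0X ex0p x0_unique; have [XU Ttree subdiv nbhd two] := S.
have [tin [tsym _] _ _ _] := Ttree.
have lX : l \notin X by apply: contraTN lW => /(subsetP XW) /setD2P [/eqP].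
have pX : p \notin X by apply: contraTN pW => /(subsetP XW) /setD2P [_ /eqP].
have x0l : (x0 == l) = false by apply: contraNF lX => /eqP <-.
have tl a b : t a b -> (a == l) || (b == l) = false.
  by move=> /tin /andP [aX bX]; apply/norP; split; apply: contraNneq lX => <-.
have lp : l != p by apply: contraTneq elp => ->; rewrite e_irr.
split.
- exact: setUS.
- exact: tree_on_add_leaf.
- move=> a b /orP [/orP [tab | /andP [/eqP -> /eqP ->]] | /andP [/eqP -> /eqP ->]] /=;
    last 2 first.
  1-2: by rewrite eqxx ?orbT; split; rewrite // in_setU1 negb_or eq_sym lp pX.
  have [sab /setD2P [sl _ sW] sX eas ebs] := subdiv _ _ tab.
  have tba : t b a by rewrite tsym.
  by rewrite (tl _ _ tab) (tl _ _ tba) in_setU1 negb_or sl sX.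
- move=> x w; rewrite in_setU1 => /orP [/eqP -> | xX] wW exw.
    by exists x0; rewrite /add_edge ?eqxx ?orbT //= (lleaf wW exw).
  have /setD2P [xl xp xW] := subsetP XW x xX.
  case: (eqVneq w l) => [wl | wl].
    by move: xp; rewrite (lleaf xW) ?eqxx // -wl e_sym.
  case: (eqVneq w p) => [wp | wp].
    have xx0 : x = x0 by apply: x0_unique; rewrite // -wp.
    by exists l; rewrite /add_edge xx0 ?eqxx ?orbT //= wp.
  have wWlp : w \in W :\: [set l; p] by rewrite !inE negb_or wl wp.
  have [y txy ->] := nbhd _ _ xX wWlp exw.
  by exists y; rewrite /add_edge ?txy // (tl _ _ txy).
- move=> a b z /orP [/orP [tab | /andP [/eqP -> /eqP ->]] | /andP [/eqP -> /eqP ->]].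
  + rewrite (tl _ _ tab) in_setU1 => /orP [/eqP -> | zX] esz; last exact: two.
    have [_ /setD2P [_ sp sW] _ _ _] := subdiv _ _ tab.
    by move: sp; rewrite (lleaf sW) ?eqxx // e_sym.
  + rewrite eqxx /= in_setU1 => /orP [/eqP -> | zX] epz; first by left.
    by right; apply: x0_unique; rewrite // e_sym.
  + rewrite eqxx orbT /= in_setU1 => /orP [/eqP -> | zX] epz; first by right.
    by left; apply: x0_unique; rewrite // e_sym.
Qed.

Lemma support_branch_nbr_unique v :
  (forall w, induced e W p w -> w <> l -> w <> v -> forall z, induced e W w z -> z = p) ->
  forall a b, a \in X -> b \in X -> e a p -> e b p -> a = b.
Proof.
move=> pleaves; have [_ [_ _ _ tconn _] subdiv _ _] := S.
have lonely a b : a \in X -> b \in X -> e a p -> a != v -> b = a.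
  move=> aX bX eap av; apply/eqP; apply: contraT => ba.
  have /setD2P [al _ aW] := subsetP XW a aX.
  have [c tac] : exists c, t a c by apply: connect_nbr (tconn a b aX bX) _; rewrite eq_sym.
  have [_ /setD2P [_ sp sW] _ eas _] := subdiv _ _ tac.
  have sap : s a c = p.
    apply: (pleaves a); [| exact/eqP | exact/eqP |].
      by rewrite /induced /= e_sym eap pW aW.
    by rewrite /induced /= eas aW sW.
  by rewrite sap eqxx in sp.
move=> a b aX bX eap ebp.
case: (eqVneq a v) => [av | av]; last by symmetry; apply: lonely.
case: (eqVneq b v) => [bv | bv]; first by rewrite av bv.
exact: lonely.
Qed.

End MarkedLeaf.

Lemma dichotomy_marked_leaf (W U : {set V}) l p v : U \subset W -> induced e W l p ->
  (forall w, induced e W l w -> w = p) ->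
  (forall w, induced e W p w -> w <> l -> w <> v -> forall z, induced e W w z -> z = p) ->
  l \in U -> pairing_or_substructure (W :\: [set l; p]) (U :\: [set l; p]) ->
  pairing_or_substructure W U.
Proof.
move=> UW /andP [/andP [elp lW] pW] lleaf pleaves lU [[M [m [MW UM mM]]] | [X [t [s S]]]].
  left; have notM x : x \in [set l; p] -> x \notin M.
    by move=> xlp; apply: contraTN xlp => /(subsetP MW); rewrite inE => /andP [].
  exists (l |: (p |: M)), (extend_pairing l p m); split.
  - by rewrite !subUset !sub1set lW pW (subset_trans MW (subsetDl _ _)).
  - apply/subsetP => u uU; rewrite !in_setU1.
    case: (eqVneq u l) => //= ul; case: (eqVneq u p) => //= up.
    by rewrite (subsetP UM) // !inE negb_or ul up.
  - by apply: pairing_add_edge; rewrite ?notM // !inE eqxx ?orbT.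
right; have XW : X \subset W :\: [set l; p] := subset_trans (sub_branch S) (setSD _ UW).
have lleaf' w : w \in W -> e l w -> w = p.
  by move=> wW elw; apply: lleaf; rewrite /induced /= elw lW wW.
case: (boolP [exists x0 in X, e x0 p]) => [/existsP [x0 /andP [x0X ex0p]] | none].
  have x0_unique a : a \in X -> e a p -> a = x0.
    by move=> aX eap; apply: (support_branch_nbr_unique S XW pW pleaves).
  exists (l |: X), (add_edge t l x0), (fun a b => if (a == l) || (b == l) then p else s a b).
  apply: substructure_mono (substructure_add_leaf S XW lW pW elp lleaf' x0X ex0p x0_unique)
    (subxx _) _ (fun _ _ _ wW _ => wW).
  by rewrite subUset sub1set lU subsetDl.
exists X, t, s; apply: substructure_mono S (subsetDl _ _) (subsetDl _ _) _.
move=> x w xX wW exw; have /setD2P [_ xp xW] := subsetP XW x xX.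
rewrite !inE !negb_or wW andbT; apply/andP; split; apply/eqP => ew.
  by move: xp; rewrite (lleaf' x) ?eqxx // -ew e_sym.
by move/existsP: none; apply; exists x; rewrite xX -ew exw.
Qed.

Lemma forest_dichotomy (W U : {set V}) : U \subset W -> pairing_or_substructure W U.
Proof.
have [n] := ubnP #|W|; elim: n W U => // n IH W U ltW UW.
case: (boolP [exists a, exists b, induced e W a b]) => [/existsP [a /existsP [b eab]] | noedge].
  have [l [p [v [elp lleaf pleaves]]]] := exists_leaf_support (induced_sym W e_sym)
    (induced_irr W e_irr) (induced_acyclic (W := W) e_acyclic) eab.
  have lW : l \in W by move: elp => /andP [/andP [_ ->]].
  have ltW' (W' : {set V}) : W' \subset W :\ l -> #|W'| < n.
    by move=> /subset_leq_card; have := cardsD1 l W; rewrite lW; lia.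
  case: (boolP (l \in U)) => lU.
    apply: (dichotomy_marked_leaf UW elp lleaf pleaves lU); apply: IH; last exact: setSD.
    by apply: ltW'; apply: setDS; rewrite sub1set !inE eqxx.
  apply: (dichotomy_unmarked_leaf UW elp lleaf lU); apply: IH; first exact: ltW'.
  apply/subsetP => u; rewrite !inE => /andP [up uU]; rewrite (subsetP UW) // andbT.
  by apply: contraNneq lU => <-.
case: (set_0Vmem U) => [U0 | [u uU]].
  by left; exists set0, id; rewrite U0 sub0set; split => // v; rewrite inE.
(* a vertex of U with no neighbour in W is a substructure S(P_1) on its own *)
right; exists [set u], [rel a b | false], (fun a b => a); split => //.
- by rewrite sub1set.
- split => //; first by apply/set0Pn; exists u; rewrite inE.
    by move=> x y /set1P -> /set1P ->; exact: connect0.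
  by move=> [[|c0 [|c1 c]] []].
- move=> x w /set1P -> wW euw; move/existsP: noedge; case; exists u.
  by apply/existsP; exists w; rewrite /induced /= euw wW (subsetP UW).
Qed.

End ForestDichotomy.

Section Criticality.
Variables (V : finType) (e : rel V).
Hypothesis e_tree : is_tree e.

Lemma staller_wins_hyperedge D : staller_wins e D -> exists2 X, hyperedge e X & X :&: D = set0.
Proof.
move=> SW; have [_ [e_sym e_irr] _ _ e_acyclic] := e_tree.
have [[M [m [_ DM mM]]] | [X [t [s S]]]] := forest_dichotomy e_sym e_irr e_acyclic (subsetT (~: D)).
  have fresh : respects_pairing M m set0 set0 by move=> v _; rewrite inE.
  by move: SW; rewrite /staller_wins (negbTE (dominator_pairing_strategy e_irr mM DM _ fresh)).
exists X; first exact: substructure_hyperedge S.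
apply/setP => x; rewrite !inE; apply/andP => [[xX xD]].
by have := subsetP (sub_branch S) x xX; rewrite inE xD.
Qed.

Lemma hyperedge_staller_wins D X : hyperedge e X -> X :&: D = set0 -> staller_wins e D.
Proof.
move=> HX XD; have [_ [e_sym _] _ _ _] := e_tree.
have [t [s S]] := hyperedge_substructure e_sym HX.
have XnD : X \subset ~: D.
  apply/subsetP => x xX; rewrite inE; apply: contra_eqN XD => xD.
  by apply/set0Pn; exists x; rewrite inE xX.
have S' := substructure_mono S (subxx _) XnD (fun _ _ _ wW _ => wW).
rewrite /staller_wins -cardsT -setC0.
exact: staller_forest_wins (substructure_staller_forest S').
Qed.

Lemma dominator_wins_transversal D : dominator_wins e D <-> Defs.transversal e D.
Proof.
split=> [DW X HX | trD]; first by apply: contraNneq DW => XD; apply: hyperedge_staller_wins HX XD.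
by apply/negP => /staller_wins_hyperedge [X HX XD]; move: (trD X HX); rewrite XD eqxx.
Qed.

End Criticality.

Theorem proposition6p5 (V : finType) (e : rel V) (D : {set V}) :
  is_tree e ->
  (dominator_critical e D <->
   (exists X, hyperedge e X) /\ minimal_transversal e D).
Proof.
move=> e_tree; split.
- move=> [/set0Pn [v vD] /(dominator_wins_transversal e_tree D) trD critical].
  have [X HX _] := staller_wins_hyperedge e_tree (critical v vD).
  split; first by exists X.
  split=> // D' /properP [D'D [w wD wD']] trD'.
  have [Y HY YD] := staller_wins_hyperedge e_tree (critical w wD).
  have /set0Pn [y] := trD' Y HY; rewrite inE => /andP [yY yD'].
  suff : y \in Y :&: (D :\ w) by rewrite YD inE.
  by rewrite !inE yY (subsetP D'D _ yD') andbT; apply: contraNneq wD' => <-.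
- move=> [[X HX] [trD minD]]; split.
  + by have /set0Pn [x] := trD X HX; rewrite inE => /andP [_ xD]; apply/set0Pn; exists x.
  + exact/(dominator_wins_transversal e_tree D).
  + move=> v vD; apply: NNPP => notSW; apply: (minD _ (properD1 vD)) => Y HY.
    by apply/eqP => YD; apply: notSW; apply: hyperedge_staller_wins HY YD.
Qed.
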